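(* Let $\mathcal C,\mathcal D\subseteq\{0,1\}^n$ be neural codes. Then $CF(J_{\mathcal C\cup\mathcal D})=\{h_R : h\in MP(\mathcal C,\mathcal D)\}$.
   Context: All polynomials lie in $\mathbb F_2[x_1,\dots,x_n]$. A pseudo-monomial is a polynomial $\prod_{i\in\sigma}x_i\prod_{j\in\tau}(1-x_j)$ with $\sigma,\tau\subseteq[n]$, $\sigma\cap\tau=\emptyset$. For $v\in\{0,1\}^n$ let $\rho_v=\prod_{v_i=1}x_i\prod_{v_j=0}(1-x_j)$. For a code $\mathcal C\subseteq\{0,1\}^n$, the neural ideal is $J_\mathcal C=\langle\rho_v : v\in\{0,1\}^n\setminus\mathcal C\rangle$. A pseudo-monomial $f\in J_\mathcal C$ is minimal if there is no pseudo-monomial $g\in J_\mathcal C$ of smaller degree with $f=gh$ for some polynomial $h$; the canonical form $CF(J_\mathcal C)$ is the set of all minimal pseudo-monomials in $J_\mathcal C$. A polynomial is square-free if it is a sum of monomials $x^\alpha$ with all $\alpha_i\in\{0,1\}$; every polynomial $h$ has a unique square-free polynomial $h_R$ agreeing with it as a function on $\{0,1\}^n$ (equivalently, congruent to $h$ modulo $\langle x_i^2-x_i\rangle$). If $CF(J_\mathcal C)=\{f_1,\dots,f_r\}$ and $CF(J_\mathcal D)=\{g_1,\dots,g_s\}$, the set of reduced products is $P(\mathcal C,\mathcal D)=\{(f_ig_j)_R : i\in[r], j\in[s]\}$ and the minimal reduced products are $MP(\mathcal C,\mathcal D)=\{h\in P(\mathcal C,\mathcal D): h\neq0 \text{ and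 } h\neq fg \text{ for every } f\in P(\mathcal C,\mathcal D) \text{ and every polynomial } g\neq1\}$. *)

From HB Require Import structures.
From mathcomp Require Import all_boot all_algebra.
From mathcomp Require Import mpoly.

Set Implicit Arguments.
Unset Strict Implicit.
Unset Printing Implicit Defensive.

Import GRing.Theory.
Local Open Scope ring_scope.

Notation F2poly n := {mpoly 'F_2[n]}.

Notation word n := {ffun 'I_n -> bool}.

Notation code n := {set word n}.

Definition pm (n : nat) (sigma tau : {set 'I_n}) : F2poly n :=
  (\prod_(i in sigma) 'X_i) * (\prod_(j in tau) (1 - 'X_j)).

Definition is_pseudo_monomial (n : nat) (f : F2poly n) : Prop :=
  exists sigma tau : {set 'I_n}, [disjoint sigma & tau] /\ f = pm sigma tau.

Definition rho (n : nat) (v : word n) : F2poly n :=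
  pm [set i | v i] [set j | ~~ v j].

Definition in_neural_ideal (n : nat) (C : code n) (f : F2poly n) : Prop :=
  exists g : {ffun word n -> F2poly n},
    f = \sum_(v in ~: C) g v * rho v.

(* Total degree of a polynomial (of a nonzero one; msize p = 1 + deg p). *)
Definition tdeg (n : nat) (p : F2poly n) : nat := (msize p).-1.

Definition minimal_pm (n : nat) (C : code n) (f : F2poly n) : Prop :=
  is_pseudo_monomial f /\ in_neural_ideal C f /\
  ~ (exists g h : F2poly n, is_pseudo_monomial g /\ in_neural_ideal C g /\
        (tdeg g < tdeg f)%N /\ f = g * h).

Definition CF (n : nat) (C : code n) : F2poly n -> Prop := minimal_pm C.

(* Square-free reduction h_R: replace each monomial x^alpha by
   x^(min(alpha_i,1)), i.e. reduce modulo <x_i^2 - x_i>. *)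
Definition sqfree_mon (n : nat) (m : 'X_{1..n}) : 'X_{1..n} :=
  [multinom (minn (m i) 1%N) | i < n].

Definition reduce (n : nat) (p : F2poly n) : F2poly n :=
  \sum_(m <- msupp p) p@_m *: 'X_[sqfree_mon m].

Definition P_red (n : nat) (C D : code n) (h : F2poly n) : Prop :=
  exists f g : F2poly n, CF C f /\ CF D g /\ h = reduce (f * g).

Definition MP (n : nat) (C D : code n) (h : F2poly n) : Prop :=
  P_red C D h /\ h <> 0 /\
  (forall f g : F2poly n, P_red C D f -> g <> 1 -> h <> f * g).

From HB Require Import structures.
From mathcomp Require Import all_boot all_order all_algebra.
From mathcomp Require Import mpoly.
From mathcomp Require Import zify.

Set Implicit Arguments.
Unset Strict Implicit.
Unset Printing Implicit Defensive.

Import Order.TTheory GRing.Theory.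
Local Open Scope ring_scope.

(* Over F_2 a square-free polynomial is determined by its values on {0,1}^n, and the
   pseudo-monomial pm s t is the indicator of the cube {v | v = 1 on s, v = 0 on t}.
   Hence pm s t lies in J_C iff its cube misses C, pm s' t' divides pm s t iff s' ⊆ s and
   t' ⊆ t, and CF(J_C) consists of the pm s t for the inclusion-minimal pairs (s, t) whose
   cube misses C.  The reduced product of pm s1 t1 and pm s2 t2 is pm (s1 ∪ s2) (t1 ∪ t2)
   (or 0), and a cube misses C ∪ D iff it misses both codes.  So a pair that is minimal for
   C ∪ D is the union of a minimal pair for C and one for D, and conversely a union whose
   pseudo-monomial has no proper reduced-product divisor is minimal for C ∪ D. *)

Lemma prodr_nat_of_bool (R : comPzSemiRingType) (I : finType) (P : pred I) (c : I -> bool) :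
  \prod_(i | P i) ((c i)%:R : R) = ([forall i, P i ==> c i])%:R.
Proof.
case: forallP => [allc | /forallP/forallPn [i]].
  by apply: big1 => i Pi; rewrite (implyP (allc i) Pi).
rewrite negb_imply => /andP [Pi /negbTE ci].
by rewrite (bigD1 i) //= ci mul0r.
Qed.

Section BooleanPoints.

Variable n : nat.
Implicit Types (p q : F2poly n) (v : word n) (s t S T : {set 'I_n}).

Definition bool_pt v : 'I_n -> 'F_2 := fun i => (v i)%:R.

Definition in_cube s t v : bool := [forall i in s, v i] && [forall j in t, ~~ v j].

Lemma meval_pm s t v : (pm s t).@[bool_pt v] = (in_cube s t v)%:R.
Proof.
rewrite /pm mevalM !rmorph_prod /=.
under eq_bigr => i _ do rewrite mevalXU.
under [X in _ * X]eq_bigr => i _ do rewrite mevalB meval1 mevalXU.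
have -> : \prod_(i in t) (1 - bool_pt v i) = \prod_(i in t) ((~~ v i)%:R : 'F_2).
  by apply: eq_bigr => i _; rewrite /bool_pt; case: (v i); rewrite ?subr0 ?subrr.
by rewrite !prodr_nat_of_bool -natrM /in_cube; case: forallP; case: forallP.
Qed.

Definition sqfree_on (S : {set 'I_n}) p :=
  forall m, m \in msupp p -> forall i, (m i <= (i \in S))%N.

Lemma sqfree_onS S S' p : S \subset S' -> sqfree_on S p -> sqfree_on S' p.
Proof.
move=> /subsetP sSS' sfp m mp i; apply: leq_trans (sfp m mp i) _.
by case iS: (i \in S) => //; rewrite sSS'.
Qed.

Lemma sqfree_on0 S : sqfree_on S 0.
Proof. by move=> m; rewrite msupp0. Qed.

Lemma sqfree_onD S p q : sqfree_on S p -> sqfree_on S q -> sqfree_on S (p + q).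
Proof.
move=> sfp sfq m /msuppD_le; rewrite mem_cat => /orP [mp | mq]; [exact: sfp | exact: sfq].
Qed.

Lemma sqfree_onN S p : sqfree_on S p -> sqfree_on S (- p).
Proof. by move=> sfp m; rewrite (perm_mem (msuppN p)); apply: sfp. Qed.

Lemma sqfree_onZ S c p : sqfree_on S p -> sqfree_on S (c *: p).
Proof. by move=> sfp m /msuppZ_le; apply: sfp. Qed.

Lemma sqfree_on_sum S (I : finType) (P : pred I) (F : I -> F2poly n) :
  (forall i, P i -> sqfree_on S (F i)) -> sqfree_on S (\sum_(i | P i) F i).
Proof. by move=> sfF; elim/big_ind: _ => //; [apply: sqfree_on0 | apply: sqfree_onD]. Qed.

Lemma sqfree_onM S T p q : [disjoint S & T] ->
  sqfree_on S p -> sqfree_on T q -> sqfree_on (S :|: T) (p * q).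
Proof.
move=> dST sfp sfq m /msuppM_le /allpairsP [[m1 m2] /= [m1p m2q ->]] i.
rewrite mnmDE in_setU; move: (sfp _ m1p i) (sfq _ m2q i).
case iS: (i \in S); case iT: (i \in T) => /=; rewrite ?leqn0.
- by move/disjointFr: dST => /(_ i iS); rewrite iT.
- by move=> le1 /eqP ->; rewrite addn0.
- by move=> /eqP ->.
- by move=> /eqP -> /eqP ->.
Qed.

Lemma sqfree_on_prod_seq (r : seq 'I_n) (F : 'I_n -> F2poly n) : uniq r ->
  (forall i, i \in r -> sqfree_on [set i] (F i)) ->
  sqfree_on [set i in r] (\prod_(i <- r) F i).
Proof.
elim: r => [_ _ | a r IHr /= /andP [ar ur] sfF].
  by rewrite big_nil => m; rewrite msupp1 inE => /eqP -> i; rewrite mnm0E.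
have -> : [set i in a :: r] = [set a] :|: [set i in r] by apply/setP => i; rewrite !inE.
rewrite big_cons; apply: sqfree_onM.
- by rewrite disjoints1 inE.
- by apply: sfF; rewrite mem_head.
- by apply: IHr => // i ir; apply: sfF; rewrite inE ir orbT.
Qed.

Lemma sqfree_on_prod s (F : 'I_n -> F2poly n) :
  (forall i, i \in s -> sqfree_on [set i] (F i)) -> sqfree_on s (\prod_(i in s) F i).
Proof.
move=> sfF; have := @sqfree_on_prod_seq _ F (enum_uniq s).
by rewrite set_enum big_enum; apply => i; rewrite mem_enum; apply: sfF.
Qed.

Lemma sqfree_onX i : sqfree_on [set i] 'X_i.
Proof.
by move=> m; rewrite msuppX inE => /eqP -> j; rewrite mnm1E inE eq_sym; case: (j == i).
Qed.

Lemma sqfree_on_1subX i : sqfree_on [set i] (1 - 'X_i).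
Proof.
move=> m /msuppB_le; rewrite mem_cat msupp1 msuppX !inE => /orP [] /eqP -> j.
  by rewrite mnm0E.
by rewrite mnm1E inE eq_sym; case: (j == i).
Qed.

Lemma sqfree_pm s t : [disjoint s & t] -> sqfree_on setT (pm s t).
Proof.
move=> dst; apply: (@sqfree_onS (s :|: t)); first exact: subsetT.
apply: sqfree_onM dst _ _; apply: sqfree_on_prod => i _;
  [exact: sqfree_onX | exact: sqfree_on_1subX].
Qed.

(* Induction along the monomial order: at the indicator point of a support monomial m, every
   other monomial of p either divides m (and vanishes by induction) or has a variable that is 0. *)
Lemma sqfree_eq0 p : sqfree_on setT p -> (forall v, p.@[bool_pt v] = 0) -> p = 0.
Proof.
move=> sfp p0; apply/mpolyP => m; rewrite mcoeff0.
elim/(well_founded_ind (@ltom_wf n)): m => m IHm.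
case mp: (m \in msupp p); last by apply: memN_msupp_eq0; rewrite mp.
have mbool i (m' : 'X_{1..n}) : m' \in msupp p -> m' i = 0%N \/ m' i = 1%N.
  by move=> m'p; move: (sfp m' m'p i); rewrite inE; case: (m' i) => [|[|]]; auto.
pose v : word n := [ffun i => m i != 0%N].
have := p0 v; rewrite mevalE (bigD1_seq m) ?msupp_uniq //=.
have -> : \prod_i bool_pt v i ^+ m i = 1.
  by apply: big1 => i _; rewrite /bool_pt ffunE; case: (mbool i m mp) => ->.
rewrite mulr1 big_seq_cond big1 ?addr0 // => m' /andP [m'p m'm].
have [/mnm_lepP le_m'm | /forallPn [i]] := boolP (m' <= m)%MM.
  by rewrite IHm ?mul0r // lt_neqAle m'm lem_leo //; apply/mnm_lepP.
rewrite -ltnNge (bigD1 i) //= /bool_pt ffunE.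
case: (mbool i m' m'p) => -> //; case: (mbool i m mp) => -> //.
by rewrite expr1 mul0r mulr0.
Qed.

Lemma sqfree_eq p q : sqfree_on setT p -> sqfree_on setT q ->
  (forall v, p.@[bool_pt v] = q.@[bool_pt v]) -> p = q.
Proof.
move=> sfp sfq pq; apply/eqP; rewrite -subr_eq0; apply/eqP/sqfree_eq0.
  by apply: sqfree_onD => //; apply: sqfree_onN.
by move=> v; rewrite mevalB pq subrr.
Qed.

Lemma sqfree_reduce p : sqfree_on setT (reduce p).
Proof.
rewrite /reduce; elim/big_ind: _ => [|p1 p2|m _]; [exact: sqfree_on0 | exact: sqfree_onD |].
apply: sqfree_onZ => m'.
by rewrite msuppX inE => /eqP -> i; rewrite mnmE inE geq_minr.
Qed.

Lemma meval_reduce p v : (reduce p).@[bool_pt v] = p.@[bool_pt v].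
Proof.
rewrite /reduce raddf_sum mevalE; apply: eq_bigr => m _.
rewrite [LHS]/= mevalZ mevalX; congr (_ * _); apply: eq_bigr => i _.
by rewrite mnmE /bool_pt; case: (m i) => [|k] //=; case: (v i); rewrite ?expr1n ?expr0n.
Qed.

Lemma reduce_sqfree_eq p q : sqfree_on setT q ->
  (forall v, p.@[bool_pt v] = q.@[bool_pt v]) -> reduce p = q.
Proof.
move=> sfq pq; apply: (sqfree_eq (@sqfree_reduce p) sfq) => v.
by rewrite meval_reduce pq.
Qed.

End BooleanPoints.

Section PseudoMonomials.

Variable n : nat.
Implicit Types (p q : F2poly n) (v : word n) (s t : {set 'I_n}).

Lemma in_cube_disjoint s t v : in_cube s t v -> [disjoint s & t].
Proof.
case/andP => /forall_inP vs /forall_inP vt; apply/pred0P => i /=.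
by apply/negP => /andP [/vs vi /vt]; rewrite vi.
Qed.

Lemma in_cubeU s1 t1 s2 t2 v :
  in_cube (s1 :|: s2) (t1 :|: t2) v = in_cube s1 t1 v && in_cube s2 t2 v.
Proof.
rewrite /in_cube; apply/idP/idP.
  case/andP => /forall_inP vs /forall_inP vt.
  apply/andP; split; apply/andP; split; apply/forall_inP => i i_st;
    [apply: vs | apply: vt | apply: vs | apply: vt]; by rewrite inE i_st ?orbT.
case/andP => /andP [/forall_inP vs1 /forall_inP vt1] /andP [/forall_inP vs2 /forall_inP vt2].
apply/andP; split; apply/forall_inP => i; rewrite inE => /orP [] i_st;
  [exact: vs1 | exact: vs2 | exact: vt1 | exact: vt2].
Qed.

Lemma in_cube_indicator s t : [disjoint s & t] -> in_cube s t [ffun i => i \in s].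
Proof.
move=> dst; apply/andP; split; apply/forall_inP => i; rewrite ffunE // => it.
by apply/negP => is_; move/disjointFr: dst => /(_ i is_); rewrite it.
Qed.

(* The indicator of s, and the indicator of s plus one point i \notin t, lie in the cube of
   (s, t); so a larger cube forces the inclusions. *)
Lemma in_cube_subset s t s' t' : [disjoint s & t] ->
  (forall v, in_cube s t v -> in_cube s' t' v) -> s' \subset s /\ t' \subset t.
Proof.
move=> dst sub; split; apply/subsetP => i i_st'; apply: contraT => i_st.
  have /andP [/forall_inP vs' _] := sub _ (in_cube_indicator dst).
  by move: (vs' i i_st'); rewrite ffunE (negbTE i_st).
pose v : word n := [ffun k => (k \in s) || (k == i)].
have /andP [_ /forall_inP vt'] : in_cube s' t' v.
  apply/sub/andP; split; apply/forall_inP => k k_st; rewrite ffunE ?k_st //.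
  apply/norP; split; last by apply: contraNneq i_st => <-.
  by apply/negP => ks; move/disjointFr: dst => /(_ k ks); rewrite k_st.
by move: (vt' i i_st'); rewrite ffunE eqxx orbT.
Qed.

Lemma pm_ne0 s t : [disjoint s & t] -> pm s t != 0.
Proof.
move=> dst; apply: contra_neq (@oner_neq0 'F_2) => pm0.
by have := meval_pm s t [ffun i => i \in s]; rewrite pm0 meval0 in_cube_indicator.
Qed.

Lemma pm_eq1 s t : pm s t = 1 -> s = set0 /\ t = set0.
Proof.
move=> pm1; have in_cube_all v : in_cube s t v.
  apply: contraT => /negbTE nv; have := meval_pm s t v.
  by rewrite pm1 meval1 nv => /eqP; rewrite oner_eq0.
have /andP [/forall_inP s0 _] := in_cube_all [ffun=> false].
have /andP [_ /forall_inP t0] := in_cube_all [ffun=> true].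
split; apply/setP => i; rewrite inE; apply/negP.
  by move/s0; rewrite ffunE.
by move/t0; rewrite ffunE.
Qed.

Lemma pm_dvd_subset s t s' t' h : [disjoint s & t] -> pm s t = pm s' t' * h ->
  s' \subset s /\ t' \subset t.
Proof.
move=> dst e; apply: in_cube_subset => // v st_v.
have := meval_pm s t v; rewrite e mevalM meval_pm st_v.
by case: (in_cube s' t' v); rewrite // mul0r => /eqP; rewrite eq_sym oner_eq0.
Qed.

Lemma pm_split s t s' t' : s' \subset s -> t' \subset t ->
  pm s t = pm s' t' * pm (s :\: s') (t :\: t').
Proof.
move=> ss' tt'; rewrite /pm (big_setID s') (big_setID t' (A := t)).
by rewrite (setIidPr ss') (setIidPr tt') mulrACA.
Qed.

Lemma tdeg_mulr_lt p q : p != 0 -> q != 0 -> q != 1 -> (tdeg p < tdeg (p * q))%N.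
Proof.
move=> p0 q0 q1; rewrite /tdeg msizeM //.
have sp : (0 < msize p)%N by rewrite lt0n msize_poly_eq0.
suff sq : (1 < msize q)%N by move: sp sq; move: (msize p) (msize q); lia.
rewrite ltn_neqAle lt0n msize_poly_eq0 q0 andbT eq_sym.
apply: contra_neq q1 => /eqP /msize_poly1P [c c0 ->].
by case: c c0 => -[|[|//]] ? //= _; congr (_%:MP); apply: val_inj.
Qed.

Lemma reduce_pm s t : reduce (pm s t) = if [disjoint s & t] then pm s t else 0.
Proof.
case: ifP => dst; apply: reduce_sqfree_eq => //; first exact: sqfree_pm.
  exact: sqfree_on0.
move=> v; rewrite meval_pm meval0; case: (boolP (in_cube s t v)) => // /in_cube_disjoint.
by rewrite dst.
Qed.

Lemma reduce_pmM s1 t1 s2 t2 :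
  reduce (pm s1 t1 * pm s2 t2) = reduce (pm (s1 :|: s2) (t1 :|: t2)).
Proof.
apply: reduce_sqfree_eq; first exact: sqfree_reduce.
by move=> v; rewrite meval_reduce mevalM !meval_pm in_cubeU -natrM mulnb.
Qed.

End PseudoMonomials.

Section CanonicalForm.

Variable n : nat.
Implicit Types (p : F2poly n) (v w : word n) (s t : {set 'I_n}) (C : code n).

Definition vanishes C s t : bool := [forall c in C, ~~ in_cube s t c].

Lemma meval_rho w v : (rho w).@[bool_pt v] = (w == v)%:R.
Proof.
rewrite meval_pm; congr (nat_of_bool _)%:R; apply/andP/eqP => [[]|<-].
  move=> /forall_inP w1 /forall_inP w0; apply/ffunP => i.
  by case: (boolP (w i)) => wi; [rewrite (w1 i) | rewrite (negbTE (w0 i _))]; rewrite ?inE.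
by split; apply/forall_inP => i; rewrite inE.
Qed.

Lemma neural_ideal_meval C p : in_neural_ideal C p -> forall c, c \in C -> p.@[bool_pt c] = 0.
Proof.
move=> [g ->] c cC; rewrite raddf_sum big1 // => v; rewrite inE => vC /=.
by rewrite mevalM meval_rho; case: eqP vC => [-> | _]; rewrite ?cC ?mulr0.
Qed.

(* pm s t is the sum of the rho v over the points v of its cube, none of which lies in C. *)
Lemma pm_neural_idealP C s t : [disjoint s & t] ->
  in_neural_ideal C (pm s t) <-> vanishes C s t.
Proof.
move=> dst; split => [idl | van].
  apply/forall_inP => c cC; move: (neural_ideal_meval idl cC); rewrite meval_pm.
  by case: (in_cube s t c) => // /eqP; rewrite oner_eq0.
exists [ffun v => ((in_cube s t v)%:R)%:MP]; apply: sqfree_eq; first exact: sqfree_pm.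
  apply: sqfree_on_sum => v _; rewrite ffunE mul_mpolyC; apply: sqfree_onZ.
  by apply: sqfree_pm; rewrite -setI_eq0; apply/eqP/setP => i; rewrite !inE andbN.
move=> c; rewrite meval_pm raddf_sum /=.
under eq_bigr => v _ do rewrite ffunE mevalM mevalC meval_rho.
have [cC | cNC] := boolP (c \in C).
  rewrite (negbTE (forall_inP van c cC)) big1 // => v; rewrite inE.
  by case: eqP => [-> /negbTE | _]; rewrite ?cC ?mulr0.
rewrite (bigD1 c) ?inE //= eqxx mulr1 big1 ?addr0 // => v /andP [_ /negbTE ->].
by rewrite mulr0.
Qed.

Lemma vanishesS C s t s' t' : s' \subset s -> t' \subset t ->
  vanishes C s' t' -> vanishes C s t.
Proof.
move=> /subsetP ss' /subsetP tt' /forall_inP van; apply/forall_inP => c cC.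
apply: contra (van c cC) => /andP [/forall_inP cs /forall_inP ct].
by apply/andP; split; apply/forall_inP => i i_st; [apply: cs | apply: ct]; rewrite ?ss' ?tt'.
Qed.

Lemma vanishesU C D s t : vanishes (C :|: D) s t = vanishes C s t && vanishes D s t.
Proof.
apply/forall_inP/andP => [van | [/forall_inP vanC /forall_inP vanD] c].
  by split; apply/forall_inP => c cC; apply: van; rewrite inE cC ?orbT.
by rewrite inE => /orP []; [apply: vanC | apply: vanD].
Qed.

Definition min_vanishing C s t : Prop :=
  [/\ [disjoint s & t], vanishes C s t &
      forall s' t', s' \subset s -> t' \subset t -> vanishes C s' t' -> s' = s /\ t' = t].

Lemma CF_pmP C f : CF C f <-> exists s t, f = pm s t /\ min_vanishing C s t.
Proof.
split => [[[s [t [dst ->]]] [/(pm_neural_idealP _ dst) van nmin]] | [s [t [-> [dst van minst]]]]].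
  exists s, t; split=> //; split=> // s' t' ss' tt' van'.
  have [/andP [s's t't] | ne] := boolP ((s \subset s') && (t \subset t')).
    by split; apply/eqP; rewrite eqEsubset ?ss' ?tt' ?s's ?t't.
  have dst' : [disjoint s' & t'] := disjointW ss' tt' dst.
  have dst'' : [disjoint s :\: s' & t :\: t'] := disjointW (subsetDl _ _) (subsetDl _ _) dst.
  case: nmin; exists (pm s' t'), (pm (s :\: s') (t :\: t')).
  split; first by exists s', t'.
  split; first exact/pm_neural_idealP.
  split; last exact: pm_split.
  rewrite (pm_split ss' tt') tdeg_mulr_lt ?pm_ne0 //.
  apply: contra ne => /eqP /pm_eq1 [/eqP sD /eqP tD].
  by move: sD tD; rewrite !setD_eq0 => -> ->.
split; first by exists s, t.
split; first exact/pm_neural_idealP.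
move=> [g [h [[s' [t' [dst' ->]]] [/(pm_neural_idealP _ dst') van' [lt e]]]]].
have [ss' tt'] := pm_dvd_subset dst e.
by have [es et] := minst s' t' ss' tt' van'; move: lt; rewrite es et ltnn.
Qed.

Lemma exists_min_vanishing C s t : [disjoint s & t] -> vanishes C s t ->
  exists s' t', [/\ s' \subset s, t' \subset t & min_vanishing C s' t'].
Proof.
move: {2}(#|s| + #|t|)%N (leqnn (#|s| + #|t|)) => k; elim: k s t => [|k IHk] s t.
  rewrite leqn0 addn_eq0 !cards_eq0 => /andP [/eqP -> /eqP ->] d0 van0.
  exists set0, set0; split=> //; split=> // s' t'.
  by rewrite !subset0 => /eqP -> /eqP ->.
move=> le_st dst van.
have [/existsP [s' /existsP [t' /and4P [ss' tt' van' ne]]] | nsmaller] := boolP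
  [exists s' : {set 'I_n}, exists t' : {set 'I_n},
     [&& s' \subset s, t' \subset t, vanishes C s' t' & (s' != s) || (t' != t)]].
  have lt_card : (#|s'| + #|t'| <= k)%N.
    have le_s := subset_leq_card ss'; have le_t := subset_leq_card tt'.
    case/orP: ne => ne.
      have /proper_card : s' \proper s by rewrite properEneq ne ss'.
      lia.
    have /proper_card : t' \proper t by rewrite properEneq ne tt'.
    lia.
  have [s'' [t'' [ss'' tt'' min'']]] := IHk s' t' lt_card (disjointW ss' tt' dst) van'.
  by exists s'', t''; split=> //; apply: subset_trans; eassumption.
exists s, t; split=> //; split=> // s' t' ss' tt' van'.
move/existsPn: nsmaller => /(_ s') /existsPn /(_ t'); rewrite ss' tt' van' /= negb_or !negbK.
by case/andP => /eqP -> /eqP ->.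
Qed.

End CanonicalForm.

Section UnionOfCodes.

Variables (n : nat) (C D : code n).
Implicit Types (h : F2poly n) (s t : {set 'I_n}).

Lemma vanishesU2 s1 t1 s2 t2 : vanishes C s1 t1 -> vanishes D s2 t2 ->
  vanishes (C :|: D) (s1 :|: s2) (t1 :|: t2).
Proof.
move=> van1 van2; rewrite vanishesU.
rewrite (vanishesS (subsetUl _ _) (subsetUl _ _) van1).
by rewrite (vanishesS (subsetUr _ _) (subsetUr _ _) van2).
Qed.

Lemma exists_min_vanishing_union s t : [disjoint s & t] -> vanishes (C :|: D) s t ->
  exists s1 t1 s2 t2, [/\ min_vanishing C s1 t1, min_vanishing D s2 t2,
                         s1 :|: s2 \subset s & t1 :|: t2 \subset t].
Proof.
rewrite vanishesU => dst /andP [vanC vanD].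
have [s1 [t1 [ss1 tt1 min1]]] := exists_min_vanishing dst vanC.
have [s2 [t2 [ss2 tt2 min2]]] := exists_min_vanishing dst vanD.
by exists s1, t1, s2, t2; rewrite !subUset ss1 tt1 ss2 tt2.
Qed.

Lemma P_red_pm s1 t1 s2 t2 : min_vanishing C s1 t1 -> min_vanishing D s2 t2 ->
  [disjoint s1 :|: s2 & t1 :|: t2] -> P_red C D (pm (s1 :|: s2) (t1 :|: t2)).
Proof.
move=> min1 min2 dU; exists (pm s1 t1), (pm s2 t2).
split; [apply/CF_pmP; exists s1, t1 | split; [apply/CF_pmP; exists s2, t2|]] => //.
by rewrite reduce_pmM reduce_pm dU.
Qed.

Lemma P_red_cases h : P_red C D h ->
  h = 0 \/ exists s t, [/\ h = pm s t, [disjoint s & t] & vanishes (C :|: D) s t].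
Proof.
move=> [_ [_ [/CF_pmP [s1 [t1 [-> [_ van1 _]]]] [/CF_pmP [s2 [t2 [-> [_ van2 _]]]] ->]]]].
rewrite reduce_pmM reduce_pm; case: ifP => dU; [right | by left].
by exists (s1 :|: s2), (t1 :|: t2); split=> //; apply: vanishesU2.
Qed.

Lemma reduce_MP h : MP C D h -> reduce h = h.
Proof.
by case=> /P_red_cases [-> [] // | [s [t [-> dst _]]] _]; rewrite reduce_pm dst.
Qed.

Lemma CF_union_MP h : CF (C :|: D) h -> MP C D h.
Proof.
move/CF_pmP => [s [t [-> [dst van minst]]]].
have [s1 [t1 [s2 [t2 [min1 min2 sub_s sub_t]]]]] := exists_min_vanishing_union dst van.
have [es et] : s1 :|: s2 = s /\ t1 :|: t2 = t.
  by apply: minst => //; case: min1 min2 => _ van1 _ [_ van2 _]; apply: vanishesU2.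
split; first by rewrite -es -et; apply: P_red_pm; rewrite ?es ?et.
split; first exact/eqP/pm_ne0.
move=> f g /P_red_cases [-> _ | [s' [t' [-> _ van']]] g1 e].
  by apply/eqP; rewrite mul0r pm_ne0.
have [ss' tt'] := pm_dvd_subset dst e.
have [es' et'] := minst s' t' ss' tt' van'.
by apply: g1; apply: (mulfI (pm_ne0 dst)); rewrite mulr1 -es' -et' -e es' et'.
Qed.

(* Take a union u of minimal pairs for C and D below (s', t'); since pm u is a reduced product
   and pm s t = pm u * pm (s - u), minimality in MP forces pm (s - u) = 1, i.e. u = (s, t). *)
Lemma MP_CF_union h : MP C D h -> CF (C :|: D) h.
Proof.
move=> [/P_red_cases [-> [] // | [s [t [-> dst van]]]] [_ hmin]].
apply/CF_pmP; exists s, t; split=> //; split=> // s' t' ss' tt' van'.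
have dst' := disjointW ss' tt' dst.
have [s1 [t1 [s2 [t2 [min1 min2 sub_s sub_t]]]]] := exists_min_vanishing_union dst' van'.
have us := subset_trans sub_s ss'; have ut := subset_trans sub_t tt'.
have Pu : P_red C D (pm (s1 :|: s2) (t1 :|: t2)).
  by apply: P_red_pm => //; apply: disjointW us ut dst.
have : pm (s :\: (s1 :|: s2)) (t :\: (t1 :|: t2)) = 1.
  by apply/eqP; apply: contraT => /eqP ne1; case: (hmin _ _ Pu ne1 (pm_split us ut)).
case/pm_eq1 => /eqP sD /eqP tD; move: sD tD; rewrite !setD_eq0 => s_u t_u.
by split; apply/eqP; rewrite eqEsubset ?ss' ?tt' (subset_trans s_u sub_s, subset_trans t_u sub_t).
Qed.

End UnionOfCodes.

Theorem lemma9 (n : nat) (C D : code n) (f : F2poly n) :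
  CF (C :|: D) f <-> exists h : F2poly n, MP C D h /\ f = reduce h.
Proof.
split => [cf | [h [mp ->]]].
  by have mp := CF_union_MP cf; exists f; rewrite (reduce_MP mp).
by rewrite (reduce_MP mp); apply: MP_CF_union.
Qed.
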